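(* Every pattern in $S_3$ other than $[123]$, namely $[132]$, $[213]$, $[231]$, $[312]$ and $[321]$, admits a bountiful width system.
   Context: For $x=[x_1,\dots,x_N]\in S_N$ and a pattern $\sigma\in S_k$, an instance of $\sigma$ in $x$ is a tuple of positions $P=(P_1<\dots<P_k)$ with $(x_{P_1},\dots,x_{P_k})$ in the same relative order as $(\sigma(1),\dots,\sigma(k))$. A width system for $\sigma$ is a finite sequence of pairs $(a_1,b_1),\dots,(a_m,b_m)$ with $1\le a_l<b_l\le k$; it assigns to each instance $P$ the tuple $w(P)=(P_{b_1}-P_{a_1},\dots,P_{b_m}-P_{a_m})$. An instance is minimal in $x$ if $w(P)$ is lexicographically minimal among all instances of $\sigma$ in $x$, and locally minimal if it is a minimal instance of $\sigma$ in the consecutive segment $[x_{P_1},x_{P_1+1},\dots,x_{P_k}]$. The width system is bountiful if for every $x\in S_N$ (any $N$), every locally minimal instance $P$ and every position $t$ with $P_1<t<P_k$, $t\notin\{P_1,\dots,P_k\}$, either $x_t<x_{P_j}$ for all $j$ with $P_j<t$, or $x_t>x_{P_j}$ for all $j$ with $P_j>t$. $\sigma$ admits a bountiful width system if some width system for $\sigma$ is bountiful. *)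

From mathcomp Require Import all_boot all_fingroup.
Set Implicit Arguments. Unset Strict Implicit. Unset Printing Implicit Defensive.

(* Conventions: sequences x are seq nat (a permutation x in S_N is a seq that is
   a rearrangement of 1..N); positions are 0-indexed; a pattern of length k.+1
   is sigma : 'S_k.+1 (values 0..k, relative order is what matters); an
   occurrence tuple P : 'I_k.+1 -> nat lists positions P_1 < ... < P_{k+1}. *)

Definition val_at (x : seq nat) (p : nat) : nat := nth 0 x p.

Definition instance (k : nat) (sigma : 'S_k.+1) (x : seq nat)
  (P : 'I_k.+1 -> nat) : Prop :=
  (forall i j : 'I_k.+1, i < j -> P i < P j) /\
  P ord_max < size x /\
  (forall i j : 'I_k.+1,
     (val_at x (P i) < val_at x (P j)) = (sigma i < sigma j)).

Definition width_system (k : nat) (ws : seq (prod 'I_k.+1 'I_k.+1)) : bool :=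
  all (fun ab : prod 'I_k.+1 'I_k.+1 => (nat_of_ord ab.1 < nat_of_ord ab.2)%N) ws.

Definition width (k : nat) (ws : seq (prod 'I_k.+1 'I_k.+1))
  (P : 'I_k.+1 -> nat) : seq nat :=
  map (fun ab : prod 'I_k.+1 'I_k.+1 => P ab.2 - P ab.1) ws.

Fixpoint lexle (s t : seq nat) : bool :=
  match s, t with
  | [::], _ => true
  | _ :: _, [::] => false
  | a :: s', b :: t' => (a < b) || ((a == b) && lexle s' t')
  end.

Definition minimal_instance (k : nat) (ws : seq (prod 'I_k.+1 'I_k.+1))
  (sigma : 'S_k.+1) (x : seq nat) (P : 'I_k.+1 -> nat) : Prop :=
  instance sigma x P /\
  forall Q, instance sigma x Q -> lexle (width ws P) (width ws Q).

Definition segment (k : nat) (x : seq nat) (P : 'I_k.+1 -> nat) : seq nat :=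
  take (P ord_max - P ord0).+1 (drop (P ord0) x).

Definition shift_inst (k : nat) (P : 'I_k.+1 -> nat) : 'I_k.+1 -> nat :=
  fun i => P i - P ord0.

Definition locally_minimal (k : nat) (ws : seq (prod 'I_k.+1 'I_k.+1))
  (sigma : 'S_k.+1) (x : seq nat) (P : 'I_k.+1 -> nat) : Prop :=
  instance sigma x P /\
  minimal_instance ws sigma (segment x P) (shift_inst P).

Definition bountiful (k : nat) (ws : seq (prod 'I_k.+1 'I_k.+1))
  (sigma : 'S_k.+1) : Prop :=
  forall (N : nat) (x : seq nat), perm_eq x (iota 1 N) ->
  forall P : 'I_k.+1 -> nat, locally_minimal ws sigma x P ->
  forall t : nat, P ord0 < t < P ord_max -> (forall j, t != P j) ->
    (forall j, P j < t -> val_at x t < val_at x (P j)) \/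
    (forall j, t < P j -> val_at x (P j) < val_at x t).

Definition admits_bountiful (k : nat) (sigma : 'S_k.+1) : Prop :=
  exists ws : seq (prod 'I_k.+1 'I_k.+1), width_system ws /\ bountiful ws sigma.

(* A locally minimal instance P is lexicographically minimal among all instances
   lying inside its window [P_1, P_k].  For a pattern of length three, a position t
   of the window that violates bountifulness always lets one replace a single entry
   of P by t so that the result is still an instance in the window, but with a
   strictly smaller width.  The width system is (P_3 - P_1, P_2 - P_1), except for
   [213], where it is (P_3 - P_1, P_3 - P_2); each pattern is then a case analysis
   on how x_t compares with the values of P. *)

From mathcomp Require Import all_boot all_fingroup.
From mathcomp Require Import zify.

Set Implicit Arguments.
Unset Strict Implicit.
Unset Printing Implicit Defensive.

Definition update_at (k : nat) (P : 'I_k.+1 -> nat) (j : 'I_k.+1) (t : nat) :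
  'I_k.+1 -> nat := fun i => if i == j then t else P i.

Lemma val_at_neq (x : seq nat) (p q : nat) :
  uniq x -> p < size x -> q < size x -> p != q -> val_at x p != val_at x q.
Proof. by move=> xu px qx; rewrite /val_at nth_uniq. Qed.

Lemma ltnNgt_neq (a b : nat) : a != b -> (a < b) = ~~ (b < a).
Proof. by move=> ab; rewrite ltn_neqAle ab -leqNgt. Qed.

Lemma width_subn (k : nat) (ws : seq ('I_k.+1 * 'I_k.+1)) (P : 'I_k.+1 -> nat) (d : nat) :
  (forall i, d <= P i) -> width ws (fun i => P i - d) = width ws P.
Proof. by move=> dP; apply: eq_map => -[a b] /=; have := dP a; have := dP b; lia. Qed.

Section Instances.

Variables (k : nat) (σ : 'S_k.+1) (x : seq nat).

Lemma instance_leq (P : 'I_k.+1 -> nat) (i j : 'I_k.+1) :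
  instance σ x P -> i <= j -> P i <= P j.
Proof.
by case=> mono _; rewrite leq_eqVlt => /orP[/eqP/val_inj-> | /mono/ltnW].
Qed.

Lemma instance_window (P : 'I_k.+1 -> nat) (i : 'I_k.+1) :
  instance σ x P -> P ord0 <= P i <= P ord_max.
Proof. by move=> iP; rewrite !(instance_leq iP) ?leq_ord. Qed.

Lemma instance_segment (P Q : 'I_k.+1 -> nat) :
  instance σ x P -> instance σ x Q -> P ord0 <= Q ord0 -> Q ord_max <= P ord_max ->
  instance σ (segment x P) (fun i => Q i - P ord0).
Proof.
move=> iP iQ PQ0 QPmax; have [monoQ [_ valQ]] := iQ; have [_ [szP _]] := iP.
have Q_win (i : 'I_k.+1) : P ord0 <= Q i <= P ord_max.
  by have /andP[? ?] := instance_window i iQ; apply/andP; split; lia.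
have val_segment (i : 'I_k.+1) : val_at (segment x P) (Q i - P ord0) = val_at x (Q i).
  have /andP[lo hi] := Q_win i.
  by rewrite /val_at /segment nth_take ?nth_drop ?subnKC //; lia.
split; [|split].
- by move=> i j /monoQ; have := Q_win i; have := Q_win j; lia.
- by rewrite /segment size_take size_drop; have := Q_win ord_max; case: ifP; lia.
- by move=> i j; rewrite !val_segment; apply: valQ.
Qed.

Lemma locally_minimal_lexle (ws : seq ('I_k.+1 * 'I_k.+1)) (P Q : 'I_k.+1 -> nat) :
  locally_minimal ws σ x P -> instance σ x Q ->
  P ord0 <= Q ord0 -> Q ord_max <= P ord_max -> lexle (width ws P) (width ws Q).
Proof.
move=> [iP [_ P_min]] iQ PQ0 QPmax.
have := P_min _ (instance_segment iP iQ PQ0 QPmax).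
rewrite /shift_inst !width_subn // => i.
- by have /andP[] := instance_window i iQ; lia.
- by have /andP[] := instance_window i iP.
Qed.

Lemma instance_update (P : 'I_k.+1 -> nat) (j : 'I_k.+1) (t : nat) :
  uniq x -> instance σ x P -> t < size x ->
  (forall i : 'I_k.+1, i < j -> P i < t) -> (forall i : 'I_k.+1, j < i -> t < P i) ->
  (forall i : 'I_k.+1, i != j ->
     (val_at x t < val_at x (P i)) = (val_at x (P j) < val_at x (P i))) ->
  instance σ x (update_at P j t).
Proof.
move=> xu iP tx before after vt; have [mono [szP valP]] := iP.
have Px (i : 'I_k.+1) : P i < size x by have /andP[_ ?] := instance_window i iP; lia.
have vt_neq (i : 'I_k.+1) : i != j -> val_at x t != val_at x (P i).
  move=> ij; apply: val_at_neq => //.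
  by case: (ltngtP i j) => [/before|/after|/val_inj ij']; [lia | lia | rewrite ij' eqxx in ij].
have vP_neq (i : 'I_k.+1) : i != j -> val_at x (P j) != val_at x (P i).
  move=> ij; apply: val_at_neq => //.
  by case: (ltngtP i j) => [/mono|/mono|/val_inj ij']; [lia | lia | rewrite ij' eqxx in ij].
rewrite /update_at; split; [|split].
- move=> i i' ii'; case: ifP => [/eqP ej|/negbT nj]; case: ifP => [/eqP ej'|/negbT nj'].
  + by move: ii'; rewrite ej ej' ltnn.
  + by apply: after; rewrite -ej.
  + by apply: before; rewrite -ej'.
  + exact: mono.
- by case: ifP.
- move=> i i'; case: ifP => [/eqP->|/negbT nj]; case: ifP => [/eqP->|/negbT nj'].
  + by rewrite !ltnn.
  + by rewrite vt // valP.
  + rewrite ltnNgt_neq 1?eq_sym ?vt_neq // vt // -ltnNgt_neq ?valP //.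
    by rewrite eq_sym vP_neq.
  + exact: valP.
Qed.

Lemma locally_minimal_update_not_better (ws : seq ('I_k.+1 * 'I_k.+1))
    (P : 'I_k.+1 -> nat) (j : 'I_k.+1) (t : nat) :
  uniq x -> locally_minimal ws σ x P -> P ord0 <= t <= P ord_max ->
  (forall i : 'I_k.+1, i < j -> P i < t) -> (forall i : 'I_k.+1, j < i -> t < P i) ->
  (forall i : 'I_k.+1, i != j ->
     (val_at x t < val_at x (P i)) = (val_at x (P j) < val_at x (P i))) ->
  ~~ lexle (width ws P) (width ws (update_at P j t)) -> False.
Proof.
move=> xu lmP /andP[Pt tP] before after vt /negP; apply.
have [iP _] := lmP; have [_ [szP _]] := iP.
apply: locally_minimal_lexle lmP _ _ _; rewrite /update_at.
- by apply: instance_update => //; lia.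
- by case: ifP => // _; apply: instance_leq.
- by case: ifP => // _; apply: instance_leq iP _; rewrite leq_ord.
Qed.

End Instances.

Definition ord_mid : 'I_3 := Ordinal (isT : 1 < 3).

Lemma ord3P (i : 'I_3) : [\/ i = ord0, i = ord_mid | i = ord_max].
Proof.
by case: i => -[|[|[|//]]] lt_i3; [apply: Or31 | apply: Or32 | apply: Or33]; apply: val_inj.
Qed.

Lemma forall_ord3 (A : 'I_3 -> Prop) : A ord0 -> A ord_mid -> A ord_max -> forall i, A i.
Proof. by move=> A0 A1 A2 i; case: (ord3P i) => ->. Qed.

Lemma instance3_sorted (σ : 'S_3) (x : seq nat) (P : 'I_3 -> nat) :
  instance σ x P -> P ord0 < P ord_mid < P ord_max.
Proof. by case=> mono _; rewrite !mono. Qed.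

(* The two hypotheses exclude a violating position t left, resp. right, of the
   middle entry; the inequalities can be taken strict because x has no repeats. *)
Lemma bountiful3P (ws : seq ('I_3 * 'I_3)) (σ : 'S_3) :
  (forall x P t, uniq x -> locally_minimal ws σ x P -> P ord0 < t < P ord_mid ->
    val_at x (P ord0) < val_at x t ->
    val_at x t < val_at x (P ord_mid) \/ val_at x t < val_at x (P ord_max) -> False) ->
  (forall x P t, uniq x -> locally_minimal ws σ x P -> P ord_mid < t < P ord_max ->
    val_at x (P ord0) < val_at x t \/ val_at x (P ord_mid) < val_at x t ->
    val_at x t < val_at x (P ord_max) -> False) ->
  bountiful ws σ.
Proof.
move=> no_bad_left no_bad_right N x /perm_uniq; rewrite iota_uniq => xu P lmP t.
move=> /andP[Pt tP] t_notin_P; have [iP _] := lmP; have [_ [szP _]] := iP.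
have /andP[P01 P12] := instance3_sorted iP.
have vt_neq i : val_at x t != val_at x (P i).
  by apply: val_at_neq => //; [lia | case: (ord3P i) => ->; lia].
have := vt_neq ord0; have := vt_neq ord_mid; have := vt_neq ord_max.
case: (ltngtP t (P ord_mid)) => [tP1 | P1t | /eqP]; last by rewrite (negbTE (t_notin_P _)).
- have bad := no_bad_left x P t xu lmP.
  case: (ltnP (val_at x t) (val_at x (P ord0))) => [v_a0 | a0_v] *.
    by left => j; case: (ord3P j) => ->; lia.
  by right => j; case: (ord3P j) => ->; lia.
- have bad := no_bad_right x P t xu lmP.
  case: (ltnP (val_at x (P ord_max)) (val_at x t)) => [a2_v | v_a2] *.
    by right => j; case: (ord3P j) => ->; lia.
  by left => j; case: (ord3P j) => ->; lia.
Qed.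

Definition span_left : seq ('I_3 * 'I_3) := [:: (ord0, ord_max); (ord0, ord_mid)].
Definition span_right : seq ('I_3 * 'I_3) := [:: (ord0, ord_max); (ord_mid, ord_max)].

(* σ spells s when s is its one-line notation with values 0, 1, 2: the paper's
   pattern [132] is spelled [:: 0; 2; 1]. *)
Definition spells (σ : 'S_3) (s : seq nat) : Prop := forall i, σ i = nth 0 s i :> nat.

(* Refutes the goal False by replacing P j with t, which gives a strictly better
   instance inside the window of the locally minimal instance P. *)
Ltac refute_by_replacing j t :=
  match goal with xu : is_true (uniq ?x), lmP : locally_minimal _ _ ?x _ |- _ =>
    apply: (locally_minimal_update_not_better (j := j) (t := t) xu lmP) end;
  try apply: forall_ord3; rewrite /update_at //=; lia.

Lemma bountiful_132 (σ : 'S_3) : spells σ [:: 0; 2; 1] -> bountiful span_left σ.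
Proof.
move=> σE; apply: bountiful3P => x P t xu lmP /andP[Pt tP];
  have [iP _] := lmP; have /andP[P01 P12] := instance3_sorted iP;
  have /andP[a02 a21] : val_at x (P ord0) < val_at x (P ord_max) < val_at x (P ord_mid)
    by have [_ [_ valP]] := iP; rewrite !valP !σE.
- move=> a0v bad; case: (ltnP (val_at x t) (val_at x (P ord_max))) => [v_a2 | a2_v].
  + refute_by_replacing (ord0 : 'I_3) t.
  + refute_by_replacing (ord_mid : 'I_3) t.
- move=> bad v_a2; refute_by_replacing (ord_max : 'I_3) t.
Qed.

Lemma bountiful_213 (σ : 'S_3) : spells σ [:: 1; 0; 2] -> bountiful span_right σ.
Proof.
move=> σE; apply: bountiful3P => x P t xu lmP /andP[Pt tP];
  have [iP _] := lmP; have /andP[P01 P12] := instance3_sorted iP;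
  have /andP[a10 a02] : val_at x (P ord_mid) < val_at x (P ord0) < val_at x (P ord_max)
    by have [_ [_ valP]] := iP; rewrite !valP !σE.
- move=> a0v bad; refute_by_replacing (ord0 : 'I_3) t.
- move=> bad v_a2; case: (ltnP (val_at x t) (val_at x (P ord0))) => [v_a0 | a0_v].
  + refute_by_replacing (ord_mid : 'I_3) t.
  + refute_by_replacing (ord_max : 'I_3) t.
Qed.

Lemma bountiful_231 (σ : 'S_3) : spells σ [:: 1; 2; 0] -> bountiful span_left σ.
Proof.
move=> σE; apply: bountiful3P => x P t xu lmP /andP[Pt tP];
  have [iP _] := lmP; have /andP[P01 P12] := instance3_sorted iP;
  have /andP[a20 a01] : val_at x (P ord_max) < val_at x (P ord0) < val_at x (P ord_mid)
    by have [_ [_ valP]] := iP; rewrite !valP !σE.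
- move=> a0v bad; refute_by_replacing (ord_mid : 'I_3) t.
- lia.
Qed.

Lemma bountiful_312 (σ : 'S_3) : spells σ [:: 2; 0; 1] -> bountiful span_left σ.
Proof.
move=> σE; apply: bountiful3P => x P t xu lmP /andP[Pt tP];
  have [iP _] := lmP; have /andP[P01 P12] := instance3_sorted iP;
  have /andP[a12 a20] : val_at x (P ord_mid) < val_at x (P ord_max) < val_at x (P ord0)
    by have [_ [_ valP]] := iP; rewrite !valP !σE.
- lia.
- move=> bad v_a2; refute_by_replacing (ord_max : 'I_3) t.
Qed.

Lemma bountiful_321 (σ : 'S_3) : spells σ [:: 2; 1; 0] -> bountiful span_left σ.
Proof.
move=> σE; apply: bountiful3P => x P t _ [iP _] _;
  have /andP[a21 a10] : val_at x (P ord_max) < val_at x (P ord_mid) < val_at x (P ord0)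
    by have [_ [_ valP]] := iP; rewrite !valP !σE.
  all: lia.
Qed.

Lemma spells_id (σ : 'S_3) : spells σ [:: 0; 1; 2] -> σ = 1%g.
Proof.
move=> σE; apply/permP => i; rewrite perm1; apply/val_inj.
by case: (ord3P i) => ->; rewrite /= σE.
Qed.

Lemma spells_nonid3 (σ : 'S_3) : σ != 1%g ->
  spells σ [:: 0; 2; 1] \/ spells σ [:: 1; 0; 2] \/ spells σ [:: 1; 2; 0] \/
  spells σ [:: 2; 0; 1] \/ spells σ [:: 2; 1; 0].
Proof.
move=> σ_neq1.
have σE : spells σ [:: σ ord0 : nat; σ ord_mid : nat; σ ord_max : nat] by apply: forall_ord3.
have σ_neq (i j : 'I_3) : i != j -> (σ i : nat) != σ j by rewrite val_eqE (inj_eq perm_inj).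
have := σ_neq ord0 ord_mid isT; have := σ_neq ord0 ord_max isT.
have := σ_neq ord_mid ord_max isT.
have not_id : ~ spells σ [:: 0; 1; 2] by move/spells_id => σ1; rewrite σ1 eqxx in σ_neq1.
move: σE not_id.
by case: (σ ord0) (σ ord_mid) (σ ord_max) => [[|[|[|//]]] ?] [[|[|[|//]]] ?] [[|[|[|//]]] ?] //=;
  tauto.
Qed.

Theorem mainTheorem15 (sigma : 'S_3) : sigma != 1%g -> admits_bountiful sigma.
Proof.
case/spells_nonid3 => [σE | [σE | [σE | [σE | σE]]]].
- by exists span_left; split; last exact: bountiful_132.
- by exists span_right; split; last exact: bountiful_213.
- by exists span_left; split; last exact: bountiful_231.
- by exists span_left; split; last exact: bountiful_312.
- by exists span_left; split; last exact: bountiful_321.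
Qed.
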